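(* Let $f_0$ be a positive integer. There exists a toric line arrangement in $\mathbb{T}^2$ consisting of exactly $3$ lines with $f_0$ vertices and $f_2=2f_0$ chambers if and only if $f_0$ is odd.
   Context: Let $\mathbb{T}^2=\mathbb{R}^2/\mathbb{Z}^2$ with quotient map $\pi:\mathbb{R}^2\to\mathbb{T}^2$. A toric line is the image $\pi(L)$ of a line $L=\{(x,y)\in\mathbb{R}^2: ax+by=c\}$ with $a,b\in\mathbb{Z}$ coprime and $c\in\mathbb{R}$; it is said to be of type $(a,b)$. A toric line arrangement is a finite set $\mathcal{A}=\{l_1,\dots,l_n\}$ of distinct toric lines which is essential, i.e. not all of its lines are of the same type (not all lines are parallel). The vertices of $\mathcal{A}$ are the points of $\mathbb{T}^2$ lying on at least two lines of $\mathcal{A}$; the chambers are the connected components of $\mathbb{T}^2\setminus\bigcup_i l_i$. We write $f_0$ and $f_2$ for the numbers of vertices and chambers. *)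

From Stdlib Require Import Reals ZArith List.
Import ListNotations.
Open Scope R_scope.

(* A line a x + b y = c of R^2, given by (a, b, c). *)
Definition tline : Type := (Z * Z * R)%type.

Definition la (l : tline) : Z := fst (fst l).
Definition lb (l : tline) : Z := snd (fst l).
Definition lc (l : tline) : R := snd l.

Definition valid_tline (l : tline) : Prop := Z.gcd (la l) (lb l) = 1%Z.

(* A point (x,y) of R^2 represents a point of T^2 = R^2/Z^2;
   pi(x,y) lies on the toric line pi(L) iff some integer translate of (x,y)
   lies on L. *)
Definition on_tline (l : tline) (x y : R) : Prop :=
  exists m n : Z, IZR (la l) * (x + IZR m) + IZR (lb l) * (y + IZR n) = lc l.

Definition same_torus_pt (p q : R * R) : Prop :=
  exists m n : Z, fst q = fst p + IZR m /\ snd q = snd p + IZR n.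

Definition same_tline (l l' : tline) : Prop :=
  forall x y, on_tline l x y <-> on_tline l' x y.

Definition parallel (l l' : tline) : Prop :=
  (la l * lb l' - la l' * lb l = 0)%Z.

Definition toric_arrangement (A : list tline) : Prop :=
  Forall valid_tline A /\
  ForallOrdPairs (fun l l' => ~ same_tline l l') A /\
  (exists l l', In l A /\ In l' A /\ ~ parallel l l').

Definition on_arr (A : list tline) (x y : R) : Prop :=
  exists l, In l A /\ on_tline l x y.

Definition is_vertex (A : list tline) (p : R * R) : Prop :=
  exists l l', In l A /\ In l' A /\ ~ same_tline l l' /\
    on_tline l (fst p) (snd p) /\ on_tline l' (fst p) (snd p).

Definition num_vertices (A : list tline) (f0 : nat) : Prop :=
  exists vs : list (R * R),
    length vs = f0 /\
    (forall v, In v vs -> is_vertex A v) /\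
    ForallOrdPairs (fun v w => ~ same_torus_pt v w) vs /\
    (forall p, is_vertex A p -> exists v, In v vs /\ same_torus_pt v p).

(* pi(p) and pi(q) lie in the same (path-)component of T^2 minus the lines:
   there is a continuous path in R^2 from p to an integer translate of q
   avoiding the preimage of the union of the lines. *)
Definition same_chamber (A : list tline) (p q : R * R) : Prop :=
  exists g1 g2 : R -> R,
    continuity g1 /\ continuity g2 /\
    g1 0 = fst p /\ g2 0 = snd p /\
    same_torus_pt (g1 1, g2 1) q /\
    (forall t, 0 <= t <= 1 -> ~ on_arr A (g1 t) (g2 t)).

Definition num_chambers (A : list tline) (f2 : nat) : Prop :=
  exists cs : list (R * R),
    length cs = f2 /\
    (forall c, In c cs -> ~ on_arr A (fst c) (snd c)) /\
    ForallOrdPairs (fun c d => ~ same_chamber A c d) cs /\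
    (forall p, ~ on_arr A (fst p) (snd p) ->
       exists c, In c cs /\ same_chamber A c p).

(* Let d_ij be the determinant of the direction vectors of lines l_i, l_j and
   g = gcd(d_12, d_13).  A chamber is determined, up to translation by Z^2, by
   the integer parts of the three affine forms at its points; counting the
   possible classes gives f2 <= |d_12| + |d_13| + |d_23|, minus g when the three
   lines are concurrent.  Line l_i meets the two others in at least
   |d_ij| + |d_ik| distinct points, minus g in the concurrent case.  With
   f2 = 2 f0 these bounds force concurrency and |d_12| = |d_13| = |d_23| = g = f0,
   and three primitive vectors with pairwise determinants of the same even
   absolute value do not exist, so f0 is odd.  Conversely, for odd f0 the lines
   x = 0, x + f0 y = 0 and 2x + f0 y = 0 have f0 vertices and 2 f0 chambers. *)

From Stdlib Require Import Reals ZArith Znumtheory List Lia Lra Classical.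
Import ListNotations.
Open Scope R_scope.

Lemma ForallOrdPairs_map {A B : Type} (R : B -> B -> Prop) (f : A -> B) (l : list A) :
  ForallOrdPairs (fun x y => R (f x) (f y)) l -> ForallOrdPairs R (map f l).
Proof.
  induction 1; simpl; constructor; auto.
  rewrite Forall_forall in *. intros y Hy. apply in_map_iff in Hy.
  destruct Hy as [x [<- Hx]]. auto.
Qed.

Lemma ForallOrdPairs_app {A : Type} (R : A -> A -> Prop) (l1 l2 : list A) :
  ForallOrdPairs R l1 -> ForallOrdPairs R l2 ->
  (forall x y, In x l1 -> In y l2 -> R x y) -> ForallOrdPairs R (l1 ++ l2).
Proof.
  induction 1; intros H2 Hx; simpl; auto.
  constructor.
  - rewrite Forall_forall in *. intros y Hy. apply in_app_or in Hy.
    destruct Hy; auto. apply Hx; simpl; auto.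
  - apply IHForallOrdPairs; auto. intros; apply Hx; simpl; auto.
Qed.

Lemma ForallOrdPairs_of_NoDup {A : Type} (R : A -> A -> Prop) (l : list A) :
  NoDup l -> (forall x y, In x l -> In y l -> x <> y -> R x y) ->
  ForallOrdPairs R l.
Proof.
  induction 1 as [|x l Hx Hl IH]; intros H; constructor.
  - rewrite Forall_forall. intros y Hy. apply H; simpl; auto.
    intro; subst; auto.
  - apply IH. intros; apply H; simpl; auto.
Qed.

Lemma ForallOrdPairs_impl {A : Type} (R R' : A -> A -> Prop) (l : list A) :
  (forall x y, R x y -> R' x y) -> ForallOrdPairs R l -> ForallOrdPairs R' l.
Proof.
  intros H. induction 1; constructor; auto.
  rewrite Forall_forall in *; auto.
Qed.

Lemma pigeonhole_ForallOrdPairs {A B : Type} (R : B -> A -> Prop) (D : A -> A -> Prop)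
  (ws : list A) (vs : list B) :
  ForallOrdPairs D ws ->
  (forall v w w', R v w -> R v w' -> D w w' -> False) ->
  (forall w, In w ws -> exists v, In v vs /\ R v w) ->
  (length ws <= length vs)%nat.
Proof.
  intros H. revert vs. induction H as [|w ws Hw Hws IH]; intros vs HR Hc.
  - simpl; lia.
  - destruct (Hc w (or_introl eq_refl)) as [v [Hv Rv]].
    destruct (in_split _ _ Hv) as [l1 [l2 ->]].
    assert (length ws <= length (l1 ++ l2))%nat.
    { apply IH; auto.
      intros w' Hw'. destruct (Hc w' (or_intror Hw')) as [v' [Hv' Rv']].
      apply in_app_or in Hv'. destruct Hv' as [Hv'|[Hv'|Hv']].
      - exists v'; split; auto; apply in_or_app; auto.
      - subst v'. exfalso. eapply HR; [exact Rv| exact Rv'|].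
        rewrite Forall_forall in Hw. apply Hw; auto.
      - exists v'; split; auto; apply in_or_app; auto. }
    rewrite !length_app in *. simpl. lia.
Qed.

Lemma Z_gcd_pos (a b : Z) : (a <> 0 \/ b <> 0)%Z -> (0 < Z.gcd a b)%Z.
Proof.
  intros H. pose proof (Z.gcd_nonneg a b).
  destruct (Z.eq_dec (Z.gcd a b) 0) as [E|E]; [apply Z.gcd_eq_0 in E|]; lia.
Qed.

Ltac izr := rewrite ?plus_IZR, ?minus_IZR, ?mult_IZR, ?opp_IZR.

Definition lform (l : tline) (x y : R) : R := IZR (la l) * x + IZR (lb l) * y - lc l.

Definition det (l l' : tline) : Z := (la l * lb l' - la l' * lb l)%Z.

Definition in_strip (l : tline) (k : Z) (x y : R) : Prop :=
  IZR k < lform l x y < IZR k + 1.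

Definition concurrent (l l' l'' : tline) : Prop :=
  exists x y, on_tline l x y /\ on_tline l' x y /\ on_tline l'' x y.

Lemma det_anti l l' : det l' l = (- det l l')%Z.
Proof. unfold det. ring. Qed.

Lemma lform_translate l x y (m n : Z) :
  lform l (x + IZR m) (y + IZR n) = lform l x y + IZR (la l * m + lb l * n).
Proof. unfold lform. izr. ring. Qed.

Lemma on_tline_lform l x y : on_tline l x y -> exists N : Z, lform l x y = IZR N.
Proof.
  intros [m [n H]]. exists (- (la l * m + lb l * n))%Z.
  pose proof (lform_translate l x y m n) as E. unfold lform in *.
  rewrite opp_IZR. lra.
Qed.

Lemma lform_on_tline l x y (N : Z) : valid_tline l -> lform l x y = IZR N -> on_tline l x y.
Proof.
  intros Hv HN. destruct (Z.gcd_bezout _ _ _ Hv) as [u [v Huv]].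
  exists (- N * u)%Z, (- N * v)%Z.
  assert (E : IZR u * IZR (la l) + IZR v * IZR (lb l) = 1).
  { rewrite <- !mult_IZR, <- plus_IZR, Huv. reflexivity. }
  izr.
  transitivity (lform l x y - IZR N * (IZR u * IZR (la l) + IZR v * IZR (lb l)) + lc l);
    [unfold lform; ring|]. rewrite HN, E. ring.
Qed.

Lemma not_IZR_in_open_unit (k N : Z) (r : R) : IZR k < r < IZR k + 1 -> r <> IZR N.
Proof.
  intros [H1 H2] ->. apply lt_IZR in H1.
  assert (IZR N < IZR (k + 1)) by (rewrite plus_IZR; lra). apply lt_IZR in H. lia.
Qed.

Lemma in_strip_not_on_tline l k x y : in_strip l k x y -> ~ on_tline l x y.
Proof.
  intros Hk Hon. destruct (on_tline_lform _ _ _ Hon) as [N HN].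
  exact (not_IZR_in_open_unit _ _ _ Hk HN).
Qed.

Lemma not_on_tline_in_strip l x y : valid_tline l -> ~ on_tline l x y ->
  exists k : Z, in_strip l k x y.
Proof.
  intros Hv Hn. destruct (base_Int_part (lform l x y)) as [H1 H2].
  exists (Int_part (lform l x y)). split; [|lra].
  destruct H1 as [H1|H1]; auto. exfalso. apply Hn. eapply lform_on_tline; eauto.
Qed.

Lemma in_strip_unique l k k' x y : in_strip l k x y -> in_strip l k' x y -> k = k'.
Proof.
  intros [H1 H2] [H3 H4].
  assert (IZR k < IZR (k' + 1)) by (rewrite plus_IZR; lra).
  assert (IZR k' < IZR (k + 1)) by (rewrite plus_IZR; lra).
  apply lt_IZR in H; apply lt_IZR in H0. lia.
Qed.

Lemma same_torus_pt_sym p q : same_torus_pt p q -> same_torus_pt q p.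
Proof. intros [m [n [H1 H2]]]. exists (-m)%Z, (-n)%Z. rewrite !opp_IZR. lra. Qed.

Lemma same_torus_pt_trans p q r :
  same_torus_pt p q -> same_torus_pt q r -> same_torus_pt p r.
Proof.
  intros [m [n [H1 H2]]] [m' [n' [H3 H4]]]. exists (m + m')%Z, (n + n')%Z.
  rewrite !plus_IZR. lra.
Qed.

Lemma on_tline_same_torus_pt l p q :
  same_torus_pt p q -> on_tline l (fst p) (snd p) -> on_tline l (fst q) (snd q).
Proof.
  intros [m [n [-> ->]]] [m' [n' H]]. exists (m' - m)%Z, (n' - n)%Z.
  rewrite !minus_IZR. lra.
Qed.

Lemma same_tline_sym l l' : ~ same_tline l l' -> ~ same_tline l' l.
Proof. intros H H'. apply H. intros x y. specialize (H' x y). tauto. Qed.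

Lemma convex_comb_in_open_interval (k A B t : R) : 0 <= t <= 1 ->
  k < A < k + 1 -> k < B < k + 1 -> k < (1 - t) * A + t * B < k + 1.
Proof.
  intros Ht HA HB.
  assert (E : (1 - t) * A + t * B = A + t * (B - A)) by ring. rewrite E.
  destruct (Rle_or_lt A B).
  - assert (0 <= t * (B - A)) by (apply Rmult_le_pos; lra).
    assert (t * (B - A) <= 1 * (B - A)) by (apply Rmult_le_compat_r; lra). lra.
  - assert (t * (B - A) <= 0) by nra. assert (t * (B - A) >= B - A) by nra. lra.
Qed.

(* Strips are convex, so the segment from [c] to the translate of [c'] stays off
   every line. *)
Lemma same_chamber_of_strips (A : list tline) (c c' : R * R) (m n : Z) :
  (forall l, In l A -> exists k : Z,
     in_strip l k (fst c) (snd c) /\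
     in_strip l (k + (la l * m + lb l * n)) (fst c') (snd c')) ->
  same_chamber A c c'.
Proof.
  intros H.
  set (x1 := fst c' - IZR m); set (y1 := snd c' - IZR n).
  exists (fun t => fst c + t * (x1 - fst c)), (fun t => snd c + t * (y1 - snd c)).
  repeat split.
  - reg.
  - reg.
  - simpl; ring.
  - simpl; ring.
  - exists m, n. simpl. unfold x1, y1. split; ring.
  - intros t Ht [l [Hl Hon]].
    destruct (H l Hl) as [k [Hk1 Hk2]].
    assert (Hk1' : in_strip l k x1 y1).
    { unfold in_strip in *. rewrite plus_IZR in Hk2.
      pose proof (lform_translate l x1 y1 m n) as E.
      unfold x1, y1 in E |- *. replace (fst c' - IZR m + IZR m) with (fst c') in E by ring.
      replace (snd c' - IZR n + IZR n) with (snd c') in E by ring. lra. }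
    refine (in_strip_not_on_tline l k _ _ _ Hon). unfold in_strip.
    replace (lform l (fst c + t * (x1 - fst c)) (snd c + t * (y1 - snd c)))
      with ((1 - t) * lform l (fst c) (snd c) + t * lform l x1 y1) by (unfold lform; ring).
    apply convex_comb_in_open_interval; auto.
Qed.

Lemma strip_invariant_along_path (h : R -> R) (k : Z) :
  continuity h -> (forall t, 0 <= t <= 1 -> forall N : Z, h t <> IZR N) ->
  IZR k < h 0 < IZR k + 1 -> IZR k < h 1 < IZR k + 1.
Proof.
  intros Hc Hn [H1 H2]. split.
  - destruct (Rlt_or_le (IZR k) (h 1)) as [|Hle]; auto. exfalso.
    destruct Hle as [Hlt|Heq].
    + destruct (IVT (fun t => IZR k - h t) 0 1) as [z [Hz Hz0]];
        [reg; exact Hc|lra|lra|lra|].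
      apply (Hn z Hz k). lra.
    + apply (Hn 1 ltac:(lra) k). lra.
  - destruct (Rlt_or_le (h 1) (IZR k + 1)) as [|Hle]; auto. exfalso.
    destruct Hle as [Hlt|Heq].
    + destruct (IVT (fun t => h t - (IZR k + 1)) 0 1) as [z [Hz Hz0]];
        [reg; exact Hc|lra|lra|lra|].
      apply (Hn z Hz (k + 1)%Z). rewrite plus_IZR. lra.
    + apply (Hn 1 ltac:(lra) (k + 1)%Z). rewrite plus_IZR. lra.
Qed.

(* By the intermediate value theorem a path avoiding the lines never crosses
   from one strip to another. *)
Lemma strips_of_same_chamber (A : list tline) (c c' : R * R) :
  Forall valid_tline A -> same_chamber A c c' ->
  exists m n : Z, forall l, In l A -> forall k : Z,
    in_strip l k (fst c) (snd c) -> in_strip l (k + (la l * m + lb l * n)) (fst c') (snd c').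
Proof.
  intros HV [g1 [g2 [C1 [C2 [E1 [E2 [[m [n [F1 F2]]] Hav]]]]]]].
  exists m, n. intros l Hl k Hk.
  assert (Hlv : valid_tline l) by (rewrite Forall_forall in HV; auto).
  assert (Eq : lform l (fst c') (snd c') = lform l (g1 1) (g2 1) + IZR (la l * m + lb l * n)).
  { rewrite F1, F2. apply lform_translate. }
  unfold in_strip. rewrite Eq, (plus_IZR k).
  assert (IZR k < lform l (g1 1) (g2 1) < IZR k + 1); [|lra].
  apply (strip_invariant_along_path (fun t => lform l (g1 t) (g2 t))).
  - unfold lform. reg; auto.
  - intros t Ht N HN. apply (Hav t Ht). exists l. split; auto.
    eapply lform_on_tline; eauto.
  - rewrite E1, E2. auto.
Qed.

Lemma det_cofactor_la l1 l2 l3 :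
  (det l2 l3 * la l1 - det l1 l3 * la l2 + det l1 l2 * la l3 = 0)%Z.
Proof. unfold det. ring. Qed.

Lemma det_cofactor_lb l1 l2 l3 :
  (det l2 l3 * lb l1 - det l1 l3 * lb l2 + det l1 l2 * lb l3 = 0)%Z.
Proof. unfold det. ring. Qed.

Lemma mul_open_unit_bounds (w : Z) (t : R) : 0 < t < 1 ->
  (IZR (Z.min w 0) <= IZR w * t <= IZR (Z.max w 0)) /\
  ((w <> 0)%Z -> IZR (Z.min w 0) < IZR w * t < IZR (Z.max w 0)).
Proof.
  intros Ht. destruct (Z_le_gt_dec 0 w) as [Hw|Hw].
  - rewrite Z.min_r, Z.max_l by lia. apply IZR_le in Hw.
    split; [split; nra|]. intros Hn.
    assert (IZR w <> 0) by (intro E; apply eq_IZR in E; lia).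
    split; nra.
  - rewrite Z.min_l, Z.max_r by lia. assert (IZR w < 0) by (apply IZR_lt; lia).
    split; [split; nra|]. intros _. split; nra.
Qed.

Lemma coprime_proportional (x0 y0 p2 p3 e2 e3 : Z) :
  (x0 * p2 + y0 * p3 = 1)%Z -> (p2 * e3 = p3 * e2)%Z ->
  (e2 = p2 * (x0 * e2 + y0 * e3) /\ e3 = p3 * (x0 * e2 + y0 * e3))%Z.
Proof.
  intros Hxy He. split.
  - transitivity (e2 * (x0 * p2 + y0 * p3))%Z; [rewrite Hxy; ring|].
    transitivity (x0 * p2 * e2 + y0 * (p3 * e2))%Z; [ring|]. rewrite <- He. ring.
  - transitivity (e3 * (x0 * p2 + y0 * p3))%Z; [rewrite Hxy; ring|].
    transitivity (x0 * (p2 * e3) + y0 * p3 * e3)%Z; [ring|]. rewrite He. ring.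
Qed.

Definition Zrange (a : Z) (n : nat) : list Z := map (fun i => a + Z.of_nat i)%Z (seq 0 n).

Lemma in_Zrange (a z : Z) (n : nat) : (a <= z < a + Z.of_nat n)%Z -> In z (Zrange a n).
Proof.
  intros Hz. apply in_map_iff. exists (Z.to_nat (z - a)). split; [lia|].
  apply in_seq. lia.
Qed.

(* Chambers of three lines are counted through the strip vectors (k1,k2,k3) of
   their points.  Translating a point by (m,n) in Z^2 shifts its strip vector by
   (L1,L2,L3)(m,n); the quotient of Z^3 by this lattice is Z x Z/g, detected by
   [strip_sum] and [strip_twist] mod g, and a linear relation between the three
   forms confines [strip_sum] to an interval. *)
Section ThreeLineChambers.

Variables l1 l2 l3 : tline.
Hypotheses (V1 : valid_tline l1) (V2 : valid_tline l2) (V3 : valid_tline l3).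
Variables u v : Z.
Hypothesis bezout1 : (u * la l1 + v * lb l1 = 1)%Z.

Let alpha (l : tline) : Z := (la l * u + lb l * v)%Z.

Lemma lattice_change_of_basis (M N : Z) :
  exists m n : Z, forall l, (la l * m + lb l * n = alpha l * M + det l1 l * N)%Z.
Proof.
  exists (u * M - lb l1 * N)%Z, (v * M + la l1 * N)%Z. intros l.
  unfold alpha, det. ring.
Qed.

Variables g p2 p3 x0 y0 : Z.
Hypothesis g_pos : (0 < g)%Z.
Hypothesis det12 : det l1 l2 = (p2 * g)%Z.
Hypothesis det13 : det l1 l3 = (p3 * g)%Z.
Hypothesis bezout23 : (x0 * p2 + y0 * p3 = 1)%Z.

Let q : Z := (alpha l2 * p3 - alpha l3 * p2)%Z.

Lemma det23 : det l2 l3 = (q * g)%Z.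
Proof.
  unfold q. transitivity ((u * la l1 + v * lb l1) * det l2 l3)%Z; [rewrite bezout1; ring|].
  transitivity (alpha l2 * det l1 l3 - alpha l3 * det l1 l2)%Z; [unfold alpha, det; ring|].
  rewrite det12, det13. ring.
Qed.

Let rel_const : R := - (IZR q * lc l1 - IZR p3 * lc l2 + IZR p2 * lc l3).

Lemma lform_relation x y :
  IZR q * lform l1 x y - IZR p3 * lform l2 x y + IZR p2 * lform l3 x y = rel_const.
Proof.
  assert (Ha : (q * la l1 - p3 * la l2 + p2 * la l3 = 0)%Z).
  { apply (Z.mul_reg_r _ _ g); [lia|].
    pose proof (det_cofactor_la l1 l2 l3) as E. rewrite det23, det12, det13 in E. lia. }
  assert (Hb : (q * lb l1 - p3 * lb l2 + p2 * lb l3 = 0)%Z).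
  { apply (Z.mul_reg_r _ _ g); [lia|].
    pose proof (det_cofactor_lb l1 l2 l3) as E. rewrite det23, det12, det13 in E. lia. }
  unfold rel_const, lform.
  transitivity (rel_const + x * IZR (q * la l1 - p3 * la l2 + p2 * la l3)
                  + y * IZR (q * lb l1 - p3 * lb l2 + p2 * lb l3)).
  - unfold rel_const. izr. ring.
  - rewrite Ha, Hb. unfold rel_const. ring.
Qed.

Let strip_sum (k1 k2 k3 : Z) : Z := (q * k1 - p3 * k2 + p2 * k3)%Z.
Let strip_twist (k1 k2 k3 : Z) : Z := (x0 * (k2 - alpha l2 * k1) + y0 * (k3 - alpha l3 * k1))%Z.

Lemma strip_vectors_translate (k1 k2 k3 k1' k2' k3' : Z) :
  strip_sum k1 k2 k3 = strip_sum k1' k2' k3' ->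
  (g | strip_twist k1' k2' k3' - strip_twist k1 k2 k3)%Z ->
  exists m n : Z,
    (k1' = k1 + (la l1 * m + lb l1 * n) /\ k2' = k2 + (la l2 * m + lb l2 * n) /\
     k3' = k3 + (la l3 * m + lb l3 * n))%Z.
Proof.
  intros Hs [N HN].
  set (M := (k1' - k1)%Z).
  set (e2 := (k2' - k2 - alpha l2 * M)%Z). set (e3 := (k3' - k3 - alpha l3 * M)%Z).
  assert (He : (p2 * e3 = p3 * e2)%Z).
  { assert (E : (p2 * e3 - p3 * e2 = strip_sum k1' k2' k3' - strip_sum k1 k2 k3)%Z)
      by (unfold e2, e3, M, strip_sum, q; ring).
    lia. }
  assert (Hr : (x0 * e2 + y0 * e3 = N * g)%Z)
    by (rewrite <- HN; unfold e2, e3, M, strip_twist; ring).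
  destruct (coprime_proportional _ _ _ _ _ _ bezout23 He) as [E2 E3].
  rewrite Hr in E2, E3.
  destruct (lattice_change_of_basis M N) as [m [n Hmn]]. exists m, n.
  rewrite !Hmn, det12, det13.
  assert (Ha1 : alpha l1 = 1%Z) by (unfold alpha; lia).
  assert (Hd1 : det l1 l1 = 0%Z) by (unfold det; ring).
  rewrite Ha1, Hd1. unfold M in *. lia.
Qed.

Let P : Z := (Z.max q 0 + Z.max (- p3) 0 + Z.max p2 0)%Z.
Let Q : Z := (Z.min q 0 + Z.min (- p3) 0 + Z.min p2 0)%Z.

Lemma p23_nonzero : (p2 <> 0 \/ p3 <> 0)%Z.
Proof. destruct (Z.eq_dec p2 0) as [->|]; [right; intros ->; lia|auto]. Qed.

Lemma strip_sum_bounds x y k1 k2 k3 :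
  in_strip l1 k1 x y -> in_strip l2 k2 x y -> in_strip l3 k3 x y ->
  rel_const - IZR P < IZR (strip_sum k1 k2 k3) < rel_const - IZR Q.
Proof.
  unfold in_strip. intros K1 K2 K3.
  set (t1 := lform l1 x y - IZR k1).
  set (t2 := lform l2 x y - IZR k2).
  set (t3 := lform l3 x y - IZR k3).
  assert (E : IZR (strip_sum k1 k2 k3) = rel_const - (IZR q * t1 + IZR (- p3) * t2 + IZR p2 * t3)).
  { rewrite <- (lform_relation x y). unfold strip_sum, t1, t2, t3. izr. ring. }
  destruct (mul_open_unit_bounds q t1 ltac:(unfold t1; lra)) as [B1 S1].
  destruct (mul_open_unit_bounds (- p3) t2 ltac:(unfold t2; lra)) as [B2 S2].
  destruct (mul_open_unit_bounds p2 t3 ltac:(unfold t3; lra)) as [B3 S3].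
  unfold P, Q. rewrite !plus_IZR, E.
  destruct p23_nonzero as [Hn|Hn].
  - specialize (S3 Hn). lra.
  - assert (Hn' : (- p3 <> 0)%Z) by lia. specialize (S2 Hn'). lra.
Qed.

Let A3 : list tline := [l1; l2; l3].

Lemma strips_of_point c : ~ on_arr A3 (fst c) (snd c) ->
  exists k1 k2 k3, in_strip l1 k1 (fst c) (snd c) /\ in_strip l2 k2 (fst c) (snd c) /\
                   in_strip l3 k3 (fst c) (snd c).
Proof.
  intros Ho.
  assert (Off : forall l, In l A3 -> valid_tline l -> exists k, in_strip l k (fst c) (snd c)).
  { intros l Hl Hv. apply not_on_tline_in_strip; auto. intro. apply Ho. exists l. auto. }
  destruct (Off l1) as [k1 K1]; [simpl; auto|auto|].
  destruct (Off l2) as [k2 K2]; [simpl; auto|auto|].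
  destruct (Off l3) as [k3 K3]; [simpl; auto|auto|].
  exists k1, k2, k3. auto.
Qed.

Lemma chambers_le_of_strip_sum_range (F J : Z) (cs : list (R * R)) : (0 <= J)%Z ->
  (forall s : Z, rel_const - IZR P < IZR s < rel_const - IZR Q -> (F < s <= F + J)%Z) ->
  (forall c, In c cs -> ~ on_arr A3 (fst c) (snd c)) ->
  ForallOrdPairs (fun c d => ~ same_chamber A3 c d) cs ->
  (Z.of_nat (length cs) <= J * g)%Z.
Proof.
  intros HJ Hrange Hoff Hpw.
  set (vs := list_prod (Zrange (F + 1) (Z.to_nat J)) (Zrange 0 (Z.to_nat g))).
  assert (Hlen : (length cs <= length vs)%nat).
  { apply (pigeonhole_ForallOrdPairs
      (fun (st : Z * Z) c => exists k1 k2 k3,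
         in_strip l1 k1 (fst c) (snd c) /\ in_strip l2 k2 (fst c) (snd c) /\
         in_strip l3 k3 (fst c) (snd c) /\
         st = (strip_sum k1 k2 k3, strip_twist k1 k2 k3 mod g)%Z)
      (fun c d => ~ same_chamber A3 c d)); auto.
    - intros st c c' [k1 [k2 [k3 [K1 [K2 [K3 ->]]]]]] [k1' [k2' [k3' [K1' [K2' [K3' E]]]]]] Hns.
      apply Hns. injection E as Es Et.
      apply Z.cong_iff_0, Z.mod_divide in Et; [|lia].
      destruct (strip_vectors_translate k1 k2 k3 k1' k2' k3') as [m [n [M1 [M2 M3]]]];
        [lia| |].
      { destruct Et as [z Hz]. exists (- z)%Z. lia. }
      apply (same_chamber_of_strips _ c c' m n).
      intros l [<-|[<-|[<-|[]]]].
      + exists k1. rewrite <- M1. auto.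
      + exists k2. rewrite <- M2. auto.
      + exists k3. rewrite <- M3. auto.
    - intros c Hc. destruct (strips_of_point c (Hoff c Hc)) as [k1 [k2 [k3 [K1 [K2 K3]]]]].
      exists (strip_sum k1 k2 k3, strip_twist k1 k2 k3 mod g)%Z. split.
      + apply in_prod.
        * apply in_Zrange. specialize (Hrange _ (strip_sum_bounds _ _ _ _ _ K1 K2 K3)). lia.
        * apply in_Zrange. pose proof (Z.mod_pos_bound (strip_twist k1 k2 k3) g g_pos). lia.
      + exists k1, k2, k3. auto. }
  unfold vs, Zrange in Hlen. rewrite length_prod, !length_map, !length_seq in Hlen. nia.
Qed.

Lemma sum_abs_det : (Z.abs (det l1 l2) + Z.abs (det l1 l3) + Z.abs (det l2 l3) = (P - Q) * g)%Z.
Proof.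
  rewrite det12, det13, det23, !Z.abs_mul, (Z.abs_eq g) by lia. unfold P, Q. lia.
Qed.

Lemma chambers_le_sum_abs_det (cs : list (R * R)) :
  (forall c, In c cs -> ~ on_arr A3 (fst c) (snd c)) ->
  ForallOrdPairs (fun c d => ~ same_chamber A3 c d) cs ->
  (Z.of_nat (length cs) <= Z.abs (det l1 l2) + Z.abs (det l1 l3) + Z.abs (det l2 l3))%Z.
Proof.
  rewrite sum_abs_det. apply (chambers_le_of_strip_sum_range (Int_part (rel_const - IZR P))).
  { unfold P, Q. lia. }
  intros s [Hs1 Hs2]. destruct (base_Int_part (rel_const - IZR P)) as [I1 I2]. split.
  - apply lt_IZR. lra.
  - assert (Hs : IZR s < IZR (Int_part (rel_const - IZR P) + (P - Q) + 1)) by (izr; lra).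
    apply lt_IZR in Hs. lia.
Qed.

(* At a triple point [rel_const] is an integer, which removes one value of
   [strip_sum]. *)
Lemma chambers_le_sum_abs_det_concurrent (cs : list (R * R)) : concurrent l1 l2 l3 ->
  (forall c, In c cs -> ~ on_arr A3 (fst c) (snd c)) ->
  ForallOrdPairs (fun c d => ~ same_chamber A3 c d) cs ->
  (Z.of_nat (length cs) <= Z.abs (det l1 l2) + Z.abs (det l1 l3) + Z.abs (det l2 l3) - g)%Z.
Proof.
  intros [x [y [T1 [T2 T3]]]].
  destruct (on_tline_lform _ _ _ T1) as [N1 E1].
  destruct (on_tline_lform _ _ _ T2) as [N2 E2].
  destruct (on_tline_lform _ _ _ T3) as [N3 E3].
  assert (HH : rel_const = IZR (strip_sum N1 N2 N3)).
  { rewrite <- (lform_relation x y), E1, E2, E3. unfold strip_sum. izr. ring. }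
  replace (Z.abs (det l1 l2) + Z.abs (det l1 l3) + Z.abs (det l2 l3) - g)%Z
    with ((P - Q - 1) * g)%Z by (rewrite sum_abs_det; ring).
  apply (chambers_le_of_strip_sum_range (strip_sum N1 N2 N3 - P)).
  { pose proof p23_nonzero. unfold P, Q. lia. }
  intros s [Hs1 Hs2]. rewrite HH in Hs1, Hs2. rewrite <- minus_IZR in Hs1, Hs2.
  apply lt_IZR in Hs1; apply lt_IZR in Hs2. lia.
Qed.

End ThreeLineChambers.

Lemma chambers_le_three_lines (l1 l2 l3 : tline) (cs : list (R * R)) :
  valid_tline l1 -> valid_tline l2 -> valid_tline l3 ->
  (det l1 l2 <> 0 \/ det l1 l3 <> 0)%Z ->
  (forall c, In c cs -> ~ on_arr [l1; l2; l3] (fst c) (snd c)) ->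
  ForallOrdPairs (fun c d => ~ same_chamber [l1; l2; l3] c d) cs ->
  (Z.of_nat (length cs) <= Z.abs (det l1 l2) + Z.abs (det l1 l3) + Z.abs (det l2 l3))%Z /\
  (concurrent l1 l2 l3 ->
   (Z.of_nat (length cs) <= Z.abs (det l1 l2) + Z.abs (det l1 l3) + Z.abs (det l2 l3)
                              - Z.gcd (det l1 l2) (det l1 l3))%Z).
Proof.
  intros V1 V2 V3 Hnz Hoff Hpw.
  destruct (Z.gcd_bezout _ _ _ V1) as [u [v Huv]].
  set (g := Z.gcd (det l1 l2) (det l1 l3)).
  assert (Hg : (0 < g)%Z) by (apply Z_gcd_pos; auto).
  destruct (Z.gcd_divide_l (det l1 l2) (det l1 l3)) as [p2 Hp2].
  destruct (Z.gcd_divide_r (det l1 l2) (det l1 l3)) as [p3 Hp3].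
  destruct (Z.gcd_bezout (det l1 l2) (det l1 l3) g eq_refl) as [x0 [y0 Hxy]].
  assert (Hxy' : (x0 * p2 + y0 * p3 = 1)%Z).
  { apply (Z.mul_reg_r _ _ g); [lia|]. fold g in Hp2, Hp3. rewrite Hp2, Hp3 in Hxy. lia. }
  split.
  - exact (chambers_le_sum_abs_det l1 l2 l3 V1 V2 V3 u v Huv g p2 p3 x0 y0 Hg Hp2 Hp3 Hxy'
             cs Hoff Hpw).
  - intros Hc.
    exact (chambers_le_sum_abs_det_concurrent l1 l2 l3 V1 V2 V3 u v Huv g p2 p3 x0 y0 Hg Hp2 Hp3
             Hxy' cs Hc Hoff Hpw).
Qed.

Definition congruent_mod1 (Y1 Y2 : R) : Prop := exists z : Z, Y2 - Y1 = IZR z.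

Definition frac_point (Y0 : R) (d : Z) (k : nat) : R := Y0 + INR k / IZR d.

Lemma frac_points_pairwise (Y0 : R) (d : Z) (ks : list nat) : NoDup ks ->
  (forall k, In k ks -> (Z.of_nat k < Z.abs d)%Z) ->
  ForallOrdPairs (fun Y1 Y2 => ~ congruent_mod1 Y1 Y2) (map (frac_point Y0 d) ks).
Proof.
  intros Hnd Hks. apply ForallOrdPairs_map, ForallOrdPairs_of_NoDup; auto.
  intros k1 k2 H1 H2 Hk [z Hz]. apply Hks in H1. apply Hks in H2. unfold frac_point in Hz.
  assert (Hd : IZR d <> 0) by (intro E; apply eq_IZR in E; lia).
  assert (E : INR k2 - INR k1 = IZR z * IZR d) by (rewrite <- Hz; field; auto).
  rewrite !INR_IZR_INZ, <- minus_IZR, <- mult_IZR in E. apply eq_IZR in E.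
  destruct (Z.eq_dec z 0) as [->|Hz0]; [lia|].
  assert (Z.abs (z * d) >= Z.abs d)%Z by (rewrite Z.abs_mul; nia). lia.
Qed.

Lemma frac_congruent_multiple (d1 d2 : Z) (k1 k2 : nat) :
  (d1 <> 0)%Z -> (d2 <> 0)%Z -> congruent_mod1 (INR k1 / IZR d1) (INR k2 / IZR d2) ->
  (d2 / Z.gcd d1 d2 | Z.of_nat k2)%Z.
Proof.
  intros H1 H2 [z Hz].
  assert (R1 : IZR d1 <> 0) by (intro E; apply eq_IZR in E; lia).
  assert (R2 : IZR d2 <> 0) by (intro E; apply eq_IZR in E; lia).
  assert (E : (Z.of_nat k2 * d1 - Z.of_nat k1 * d2 = z * d1 * d2)%Z).
  { apply eq_IZR. izr. rewrite <- !INR_IZR_INZ, <- Hz. field. auto. }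
  set (g := Z.gcd d1 d2).
  assert (Hg : (0 < g)%Z) by (apply Z_gcd_pos; auto).
  pose proof (Zdivide_Zdiv_eq g d1 Hg (Z.gcd_divide_l d1 d2)) as D1.
  pose proof (Zdivide_Zdiv_eq g d2 Hg (Z.gcd_divide_r d1 d2)) as D2.
  set (a := (d1 / g)%Z) in *. set (b := (d2 / g)%Z) in *.
  apply (Z.gauss _ a).
  - exists (Z.of_nat k1 + z * d1)%Z. apply (Z.mul_reg_l _ _ g); [lia|].
    rewrite D1, D2 in E. rewrite D1. lia.
  - rewrite Z.gcd_comm. apply Z.gcd_div_gcd; auto; lia.
Qed.

Definition not_multiple (n k : nat) : bool := negb (Nat.eqb (k mod n) 0).

Lemma count_not_multiple (G n : nat) : (1 <= n)%nat ->
  length (filter (not_multiple n) (seq 0 (G * n))) = (G * (n - 1))%nat.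
Proof.
  intros Hn. induction G as [|G IH]; simpl; auto.
  replace (n + G * n)%nat with (G * n + n)%nat by lia.
  rewrite seq_app, filter_app, length_app, IH.
  destruct n as [|n]; [lia|]. rewrite Nat.add_0_l.
  change (seq (G * S n)%nat (S n)) with ((G * S n)%nat :: seq (S (G * S n)) n).
  cbn [filter]. unfold not_multiple at 1. rewrite Nat.Div0.mod_mul. cbn [negb Nat.eqb].
  rewrite forallb_filter_id.
  - rewrite length_seq. lia.
  - apply forallb_forall. intros x Hx. apply in_seq in Hx. unfold not_multiple.
    replace x with ((x - G * S n) + G * S n)%nat by lia.
    rewrite Nat.Div0.mod_add, Nat.mod_small by lia.
    destruct (x - G * S n)%nat eqn:E; [lia|]. reflexivity.
Qed.

Lemma in_seq_abs k (d : Z) : In k (seq 0 (Z.to_nat (Z.abs d))) -> (Z.of_nat k < Z.abs d)%Z.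
Proof. intros Hk. apply in_seq in Hk. lia. Qed.

Definition non_multiples (d g : Z) : list nat :=
  filter (not_multiple (Z.to_nat (Z.abs (d / g)))) (seq 0 (Z.to_nat (Z.abs d))).

Lemma length_non_multiples (d g : Z) : (0 < g)%Z -> (g | d)%Z -> (d <> 0)%Z ->
  Z.of_nat (length (non_multiples d g)) = (Z.abs d - g)%Z.
Proof.
  intros Hg Hgd Hd. pose proof (Zdivide_Zdiv_eq g d Hg Hgd) as Hq.
  set (n := Z.to_nat (Z.abs (d / g))).
  assert (Hn : (1 <= n)%nat) by (unfold n; assert (d / g <> 0)%Z by (intro E; lia); lia).
  assert (HGn : Z.to_nat (Z.abs d) = (Z.to_nat g * n)%nat).
  { unfold n. rewrite Hq at 1. rewrite Z.abs_mul, (Z.abs_eq g), Z2Nat.inj_mul by lia. auto. }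
  unfold non_multiples. fold n. rewrite HGn, count_not_multiple by auto.
  rewrite Nat2Z.inj_mul, Nat2Z.inj_sub, Z2Nat.id by lia. unfold n.
  rewrite Z2Nat.id by lia. rewrite Hq at 2. rewrite Z.abs_mul, (Z.abs_eq g) by lia. lia.
Qed.

Lemma in_non_multiples (d g : Z) (k : nat) : In k (non_multiples d g) ->
  (Z.of_nat k < Z.abs d)%Z /\ ~ (d / g | Z.of_nat k)%Z.
Proof.
  unfold non_multiples, not_multiple. intros Hk. apply filter_In in Hk.
  destruct Hk as [Hk Hnm]. split; [apply in_seq_abs; auto|]. intros Hdiv.
  assert (Hm : (k mod Z.to_nat (Z.abs (d / g)) = 0)%nat).
  { apply Nat2Z.inj. rewrite Nat2Z.inj_mod, Z2Nat.id by lia.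
    destruct (Z.eq_dec (d / g) 0) as [E|E].
    - rewrite E in Hdiv |- *. apply Z.divide_0_l in Hdiv. rewrite Hdiv. reflexivity.
    - apply Z.mod_divide; [lia|]. apply Z.divide_abs_l. exact Hdiv. }
  rewrite Hm in Hnm. discriminate.
Qed.

(* Y |-> (u c, v c) + Y (-b, a): the lift of [l] when u a + v b = 1. *)
Definition line_point (l : tline) (u v : Z) (Y : R) : R * R :=
  (IZR u * lc l - IZR (lb l) * Y, IZR v * lc l + IZR (la l) * Y).

Section VerticesOnALine.

Variable l : tline.
Variables u v : Z.
Hypothesis bezout : (u * la l + v * lb l = 1)%Z.

Let P := line_point l u v.
Let offset (l' : tline) : R := lc l' - IZR (la l' * u + lb l' * v) * lc l.

Lemma lform_line_point l' Y :
  lform l' (fst (P Y)) (snd (P Y)) = IZR (det l l') * Y - offset l'.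
Proof. unfold P, line_point, offset, lform, det; simpl. izr. ring. Qed.

Lemma line_point_on_tline Y : on_tline l (fst (P Y)) (snd (P Y)).
Proof.
  exists 0%Z, 0%Z. unfold P, line_point; simpl.
  transitivity (lc l * IZR (u * la l + v * lb l)); [izr; ring|]. rewrite bezout. ring.
Qed.

Lemma line_point_congruent Y1 Y2 : same_torus_pt (P Y1) (P Y2) -> congruent_mod1 Y1 Y2.
Proof.
  intros [m [n [H1 H2]]]. unfold P, line_point in *; simpl in *.
  exists (u * n - v * m)%Z.
  assert (E : IZR u * IZR (la l) + IZR v * IZR (lb l) = 1)
    by (rewrite <- !mult_IZR, <- plus_IZR, bezout; auto).
  izr. transitivity ((Y2 - Y1) * (IZR u * IZR (la l) + IZR v * IZR (lb l))); [rewrite E; ring|].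
  assert (Hm : IZR m = - IZR (lb l) * (Y2 - Y1)) by lra.
  assert (Hn : IZR n = IZR (la l) * (Y2 - Y1)) by lra.
  rewrite Hm, Hn. ring.
Qed.

Lemma line_point_shift Y (z : Z) : same_torus_pt (P Y) (P (Y + IZR z)).
Proof. exists (- lb l * z)%Z, (la l * z)%Z. unfold P, line_point; simpl. izr. split; ring. Qed.

Variable A : list tline.
Variable f0 : nat.
Hypothesis vertices_f0 : num_vertices A f0.

Lemma vertices_on_line_le (Ys : list R) :
  (forall Y, In Y Ys -> is_vertex A (P Y)) ->
  ForallOrdPairs (fun Y1 Y2 => ~ congruent_mod1 Y1 Y2) Ys -> (length Ys <= f0)%nat.
Proof.
  intros Hv Hd. destruct vertices_f0 as [vs [Hlen [_ [_ Hcov]]]].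
  rewrite <- Hlen, <- (length_map P).
  apply (pigeonhole_ForallOrdPairs same_torus_pt (fun w w' => ~ same_torus_pt w w')).
  - apply ForallOrdPairs_map. eapply ForallOrdPairs_impl; [|exact Hd].
    intros Y1 Y2 H Hs. exact (H (line_point_congruent _ _ Hs)).
  - intros v0 w w' H1 H2 H3. apply H3.
    eapply same_torus_pt_trans; [apply same_torus_pt_sym|]; eauto.
  - intros w Hw. apply in_map_iff in Hw. destruct Hw as [Y [<- HY]]. apply Hcov. auto.
Qed.

Variables l' l'' : tline.
Hypotheses (Il : In l A) (Il' : In l' A) (Il'' : In l'' A).
Hypotheses (V' : valid_tline l') (V'' : valid_tline l'').
Hypotheses (D' : ~ same_tline l l') (D'' : ~ same_tline l l'').

(* The lift of [l] meets the lifts of [m] at the parameters Y with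
   det l m * Y - offset m in Z, that is at |det l m| points modulo 1. *)
Lemma frac_point_on_tline (m : tline) Y0 (N : Z) k : valid_tline m -> (det l m <> 0)%Z ->
  IZR (det l m) * Y0 - offset m = IZR N ->
  on_tline m (fst (P (frac_point Y0 (det l m) k))) (snd (P (frac_point Y0 (det l m) k))).
Proof.
  intros Vm Hnz HN. apply (lform_on_tline _ _ _ (N + Z.of_nat k)%Z Vm).
  rewrite lform_line_point. unfold frac_point. rewrite plus_IZR, <- HN, <- INR_IZR_INZ.
  field. intro E; apply eq_IZR in E; auto.
Qed.

Lemma line_point_vertex (m : tline) Y : In m A -> ~ same_tline l m ->
  on_tline m (fst (P Y)) (snd (P Y)) -> is_vertex A (P Y).
Proof. intros Im Dm Hm. exists l, m. repeat split; auto using line_point_on_tline. Qed.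

Lemma vertices_ge_sum_abs_det : ~ concurrent l l' l'' ->
  (Z.abs (det l l') + Z.abs (det l l'') <= Z.of_nat f0)%Z.
Proof.
  intros Hnc.
  set (d' := det l l'). set (d'' := det l l'').
  set (YA := frac_point (offset l' / IZR d') d').
  set (YB := frac_point (offset l'' / IZR d'') d'').
  assert (OnA : forall k, In k (seq 0 (Z.to_nat (Z.abs d'))) ->
                  on_tline l' (fst (P (YA k))) (snd (P (YA k)))).
  { intros k Hk. apply in_seq_abs in Hk. apply (frac_point_on_tline _ _ 0%Z); auto; [lia|].
    unfold d'. field. intro E; apply eq_IZR in E; lia. }
  assert (OnB : forall k, In k (seq 0 (Z.to_nat (Z.abs d''))) ->
                  on_tline l'' (fst (P (YB k))) (snd (P (YB k)))).
  { intros k Hk. apply in_seq_abs in Hk. apply (frac_point_on_tline _ _ 0%Z); auto; [lia|].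
    unfold d''. field. intro E; apply eq_IZR in E; lia. }
  assert (HL : (length (map YA (seq 0 (Z.to_nat (Z.abs d')))
                        ++ map YB (seq 0 (Z.to_nat (Z.abs d'')))) <= f0)%nat).
  { apply vertices_on_line_le.
    - intros Y HY. apply in_app_or in HY.
      destruct HY as [HY|HY]; apply in_map_iff in HY; destruct HY as [k [<- Hk]].
      + apply (line_point_vertex l'); auto.
      + apply (line_point_vertex l''); auto.
    - apply ForallOrdPairs_app;
        [apply frac_points_pairwise; [apply seq_NoDup|intro; apply in_seq_abs] ..|].
      intros Y1 Y2 HY1 HY2 [z Hz]. apply Hnc.
      apply in_map_iff in HY1; destruct HY1 as [k1 [<- Hk1]].
      apply in_map_iff in HY2; destruct HY2 as [k2 [<- Hk2]].
      assert (Hs : same_torus_pt (P (YA k1)) (P (YB k2))).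
      { replace (YB k2) with (YA k1 + IZR z) by lra. apply line_point_shift. }
      exists (fst (P (YB k2))), (snd (P (YB k2))).
      split; [apply line_point_on_tline|split; auto].
      apply (on_tline_same_torus_pt _ _ _ Hs). auto. }
  rewrite length_app, !length_map, !length_seq in HL. lia.
Qed.

Lemma concurrent_parameter : concurrent l l' l'' ->
  exists Y0 (N' N'' : Z), IZR (det l l') * Y0 - offset l' = IZR N' /\
                          IZR (det l l'') * Y0 - offset l'' = IZR N''.
Proof.
  intros [x0 [y0 [T1 [T2 T3]]]].
  destruct (on_tline_lform _ _ _ T1) as [N HN].
  exists (- IZR v * x0 + IZR u * y0).
  assert (HS : same_torus_pt (P (- IZR v * x0 + IZR u * y0)) (x0, y0)).
  { exists (u * N)%Z, (v * N)%Z. unfold P, line_point; simpl. unfold lform in HN.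
    assert (E : IZR u * IZR (la l) + IZR v * IZR (lb l) = 1)
      by (rewrite <- !mult_IZR, <- plus_IZR, bezout; auto).
    rewrite !mult_IZR, <- HN. split.
    - transitivity (x0 * (IZR u * IZR (la l) + IZR v * IZR (lb l))); [rewrite E; ring|ring].
    - transitivity (y0 * (IZR u * IZR (la l) + IZR v * IZR (lb l))); [rewrite E; ring|ring]. }
  apply same_torus_pt_sym in HS.
  destruct (on_tline_lform _ _ _ (on_tline_same_torus_pt _ _ _ HS T2)) as [N' HN'].
  destruct (on_tline_lform _ _ _ (on_tline_same_torus_pt _ _ _ HS T3)) as [N'' HN''].
  rewrite lform_line_point in HN', HN''. eauto.
Qed.

(* Through a triple point the two families of intersection points share the g
   points Y0 + j/g; they are removed from the second family. *)
Lemma vertices_ge_sum_abs_det_sub_gcd_concurrent : concurrent l l' l'' ->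
  (det l l' <> 0)%Z -> (det l l'' <> 0)%Z ->
  (Z.abs (det l l') + Z.abs (det l l'') - Z.gcd (det l l') (det l l'') <= Z.of_nat f0)%Z.
Proof.
  intros Hc E1 E2.
  set (d' := det l l') in *. set (d'' := det l l'') in *. set (g := Z.gcd d' d'').
  destruct (concurrent_parameter Hc) as [Y0 [N' [N'' [HN' HN'']]]].
  assert (Hg : (0 < g)%Z) by (apply Z_gcd_pos; auto).
  set (KA := seq 0 (Z.to_nat (Z.abs d'))). set (KB := non_multiples d'' g).
  assert (HL : (length (map (frac_point Y0 d') KA ++ map (frac_point Y0 d'') KB) <= f0)%nat).
  { apply vertices_on_line_le.
    - intros Y HY. apply in_app_or in HY.
      destruct HY as [HY|HY]; apply in_map_iff in HY; destruct HY as [k [<- Hk]].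
      + apply (line_point_vertex l'); auto. apply (frac_point_on_tline _ _ N'); auto.
      + apply (line_point_vertex l''); auto. apply (frac_point_on_tline _ _ N''); auto.
    - apply ForallOrdPairs_app.
      + apply frac_points_pairwise; [apply seq_NoDup|intro; apply in_seq_abs].
      + apply frac_points_pairwise; [apply NoDup_filter, seq_NoDup|].
        intros k Hk. apply (in_non_multiples d'' g k Hk).
      + intros Y1 Y2 HY1 HY2 [z Hz].
        apply in_map_iff in HY1; destruct HY1 as [k1 [<- Hk1]].
        apply in_map_iff in HY2; destruct HY2 as [k2 [<- Hk2]].
        apply (in_non_multiples d'' g k2 Hk2).
        apply (frac_congruent_multiple d' d'' k1 k2); auto.
        exists z. unfold frac_point in Hz. lra. }
  unfold KA, KB in HL. rewrite length_app, !length_map, length_seq in HL.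
  pose proof (length_non_multiples d'' g Hg (Z.gcd_divide_r d' d'') E2). lia.
Qed.

Lemma vertices_ge_sum_abs_det_sub_gcd :
  (Z.abs (det l l') + Z.abs (det l l'') - Z.gcd (det l l') (det l l'') <= Z.of_nat f0)%Z.
Proof.
  destruct (classic (concurrent l l' l'')) as [Hc|Hnc].
  - destruct (Z.eq_dec (det l l') 0) as [E1|E1].
    { assert (Z.gcd (det l l') (det l l'') = Z.abs (det l l'')) by (rewrite E1; apply Z.gcd_0_l).
      lia. }
    destruct (Z.eq_dec (det l l'') 0) as [E2|E2].
    { assert (Z.gcd (det l l') (det l l'') = Z.abs (det l l')) by (rewrite E2; apply Z.gcd_0_r).
      lia. }
    apply vertices_ge_sum_abs_det_sub_gcd_concurrent; auto.
  - pose proof (vertices_ge_sum_abs_det Hnc). pose proof (Z.gcd_nonneg (det l l') (det l l'')).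
    lia.
Qed.

End VerticesOnALine.

Lemma vertex_bounds (A : list tline) (f0 : nat) (l l' l'' : tline) :
  num_vertices A f0 -> In l A -> In l' A -> In l'' A ->
  valid_tline l -> valid_tline l' -> valid_tline l'' ->
  ~ same_tline l l' -> ~ same_tline l l'' ->
  (Z.abs (det l l') + Z.abs (det l l'') - Z.gcd (det l l') (det l l'') <= Z.of_nat f0)%Z /\
  (~ concurrent l l' l'' -> (Z.abs (det l l') + Z.abs (det l l'') <= Z.of_nat f0)%Z).
Proof.
  intros Hv I I' I'' V V' V'' D' D''. destruct (Z.gcd_bezout _ _ _ V) as [u [v B]]. split.
  - exact (vertices_ge_sum_abs_det_sub_gcd l u v B A f0 Hv l' l'' I I' I'' V' V'' D' D'').
  - exact (vertices_ge_sum_abs_det l u v B A f0 Hv l' l'' I I' I'' V' V'' D' D'').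
Qed.

Lemma det_zero_trans l1 l2 l3 : valid_tline l1 ->
  det l1 l2 = 0%Z -> det l1 l3 = 0%Z -> det l2 l3 = 0%Z.
Proof.
  intros V1 E12 E13.
  pose proof (det_cofactor_la l1 l2 l3) as Ha. pose proof (det_cofactor_lb l1 l2 l3) as Hb.
  rewrite E12, E13 in Ha, Hb.
  destruct (Z.eq_dec (det l2 l3) 0) as [|Hnz]; auto. exfalso.
  assert (la l1 = 0%Z) by nia. assert (lb l1 = 0%Z) by nia.
  unfold valid_tline in V1. rewrite H, H0 in V1. discriminate.
Qed.

Lemma gcd_det_divides l l' l'' : valid_tline l ->
  (Z.gcd (det l l') (det l l'') | det l' l'')%Z.
Proof.
  intros V. destruct (Z.gcd_bezout _ _ _ V) as [u [v Huv]].
  assert (E : det l' l'' = ((la l' * u + lb l' * v) * det l l''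
                            - (la l'' * u + lb l'' * v) * det l l')%Z).
  { transitivity ((u * la l + v * lb l) * det l' l'')%Z; [rewrite Huv; ring|]. unfold det. ring. }
  rewrite E. apply Z.divide_sub_r; apply Z.divide_mul_r;
    [apply Z.gcd_divide_r|apply Z.gcd_divide_l].
Qed.

Lemma gcd_det_swap l l' l'' : valid_tline l -> valid_tline l' ->
  Z.gcd (det l l') (det l l'') = Z.gcd (det l' l) (det l' l'').
Proof.
  intros V V'. apply Z.divide_antisym_nonneg; try apply Z.gcd_nonneg.
  - apply Z.gcd_greatest.
    + rewrite det_anti. apply Z.divide_opp_r, Z.gcd_divide_l.
    + apply gcd_det_divides; auto.
  - apply Z.gcd_greatest.
    + rewrite (det_anti l' l). apply Z.divide_opp_r, Z.gcd_divide_l.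
    + apply gcd_det_divides; auto.
Qed.

Lemma even_mul_sign e x : (e = 1 \/ e = -1)%Z -> Z.even (e * x) = Z.even x.
Proof.
  intros [->| ->]; [rewrite Z.mul_1_l; auto|].
  replace (-1 * x)%Z with (- x)%Z by ring. apply Z.even_opp.
Qed.

Lemma coprime_not_both_even a b : Z.gcd a b = 1%Z -> Z.even a = true -> Z.even b = true -> False.
Proof.
  intros G Ea Eb. apply Z.even_spec in Ea; apply Z.even_spec in Eb.
  destruct Ea as [p Hp]; destruct Eb as [q Hq].
  assert (H : (2 | Z.gcd a b)%Z) by (apply Z.gcd_greatest; [exists p|exists q]; lia).
  rewrite G in H. destruct H as [k Hk]. lia.
Qed.

(* For even G, reducing the cofactor identities mod 2 gives v1 + v2 + v3 = 0 in
   (Z/2)^2 for the primitive vectors v_i, while det(v1, v2) = 0 mod 2 forces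
   v1 = v2; hence v3 = 0, contradicting primitivity. *)
Lemma pairwise_det_abs_odd (l1 l2 l3 : tline) (G : Z) :
  valid_tline l1 -> valid_tline l2 -> valid_tline l3 -> (0 < G)%Z ->
  Z.abs (det l1 l2) = G -> Z.abs (det l1 l3) = G -> Z.abs (det l2 l3) = G -> Z.odd G = true.
Proof.
  intros V1 V2 V3 HG H12 H13 H23.
  destruct (Z.odd G) eqn:Eo; auto. exfalso.
  assert (Ev : Z.even G = true) by (rewrite <- Z.negb_odd, Eo; auto).
  assert (Sign : forall d, Z.abs d = G -> exists e, (d = e * G /\ (e = 1 \/ e = -1))%Z)
    by (intros d Hd; exists (Z.sgn d); lia).
  destruct (Sign _ H12) as [e3 [D12 E3]]; destruct (Sign _ H13) as [e2 [D13 E2]];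
    destruct (Sign _ H23) as [e1 [D23 E1]].
  assert (IA : (G * (e1 * la l1 - e2 * la l2 + e3 * la l3) = 0)%Z).
  { rewrite <- (det_cofactor_la l1 l2 l3), D12, D13, D23. ring. }
  assert (IB : (G * (e1 * lb l1 - e2 * lb l2 + e3 * lb l3) = 0)%Z).
  { rewrite <- (det_cofactor_lb l1 l2 l3), D12, D13, D23. ring. }
  apply Z.mul_eq_0 in IA; apply Z.mul_eq_0 in IB.
  destruct IA as [|IA]; [lia|]. destruct IB as [|IB]; [lia|].
  assert (PA : Z.even (e1 * la l1 - e2 * la l2 + e3 * la l3) = true) by (rewrite IA; auto).
  assert (PB : Z.even (e1 * lb l1 - e2 * lb l2 + e3 * lb l3) = true) by (rewrite IB; auto).
  rewrite Z.even_add, Z.even_sub, !even_mul_sign in PA, PB by auto.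
  assert (PD : Z.even (det l1 l2) = true)
    by (rewrite D12, Z.even_mul, Ev; apply Bool.orb_true_r).
  unfold det in PD. rewrite Z.even_sub, !Z.even_mul in PD.
  pose proof (coprime_not_both_even _ _ V1). pose proof (coprime_not_both_even _ _ V2).
  pose proof (coprime_not_both_even _ _ V3).
  destruct (Z.even (la l1)), (Z.even (lb l1)), (Z.even (la l2)), (Z.even (lb l2)),
    (Z.even (la l3)), (Z.even (lb l3)); simpl in *; try discriminate; auto.
Qed.

Lemma multiple_between_0_and (G x : Z) : (0 < G)%Z -> (G | x)%Z -> (0 <= x <= G)%Z ->
  x = 0%Z \/ x = G.
Proof.
  intros HG [k ->] Hx. assert (Hk : k = 0%Z \/ k = 1%Z) by nia.
  destruct Hk as [-> | ->]; lia.
Qed.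

(* Summing the three vertex bounds against the chamber bound leaves no slack. *)
Lemma three_line_counts_tight (x y z G f : Z) : (0 < G)%Z -> (0 < f)%Z ->
  (G | x)%Z -> (G | y)%Z -> (G | z)%Z -> (0 <= x)%Z -> (0 <= y)%Z -> (0 <= z)%Z ->
  (2 * f <= x + y + z - G)%Z ->
  (x + y - G <= f)%Z -> (x + z - G <= f)%Z -> (y + z - G <= f)%Z ->
  x = G /\ y = G /\ z = G /\ f = G.
Proof.
  intros HG Hf Dx Dy Dz Px Py Pz C Bxy Bxz Byz.
  assert (Hx : x = 0%Z \/ x = G) by (apply multiple_between_0_and; auto; lia).
  assert (Hy : y = 0%Z \/ y = G) by (apply multiple_between_0_and; auto; lia).
  assert (Hz : z = 0%Z \/ z = G) by (apply multiple_between_0_and; auto; lia).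
  lia.
Qed.

Lemma three_lines_det_nonzero l1 l2 l3 : valid_tline l1 ->
  (exists l l', In l [l1; l2; l3] /\ In l' [l1; l2; l3] /\ ~ parallel l l') ->
  (det l1 l2 <> 0 \/ det l1 l3 <> 0)%Z.
Proof.
  intros V1 [l [l' [Il [Il' Hnp]]]].
  destruct (Z.eq_dec (det l1 l2) 0) as [E12|E12]; [|auto].
  destruct (Z.eq_dec (det l1 l3) 0) as [E13|E13]; [|auto]. exfalso.
  pose proof (det_zero_trans _ _ _ V1 E12 E13) as E23.
  apply Hnp. change (det l l' = 0%Z). unfold det in *.
  destruct Il as [<-|[<-|[<-|[]]]]; destruct Il' as [<-|[<-|[<-|[]]]]; lia.
Qed.

Lemma odd_of_three_line_counts (l1 l2 l3 : tline) (f0 : nat) (cs : list (R * R)) :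
  valid_tline l1 -> valid_tline l2 -> valid_tline l3 ->
  ~ same_tline l1 l2 -> ~ same_tline l1 l3 -> ~ same_tline l2 l3 ->
  (det l1 l2 <> 0 \/ det l1 l3 <> 0)%Z -> (0 < f0)%nat ->
  num_vertices [l1; l2; l3] f0 -> length cs = (2 * f0)%nat ->
  (forall c, In c cs -> ~ on_arr [l1; l2; l3] (fst c) (snd c)) ->
  ForallOrdPairs (fun c d => ~ same_chamber [l1; l2; l3] c d) cs ->
  Nat.odd f0 = true.
Proof.
  intros V1 V2 V3 D12 D13 D23 Hnz Hf0 Hv Hcl Hoff Hpw.
  assert (I1 : In l1 [l1; l2; l3]) by (simpl; auto).
  assert (I2 : In l2 [l1; l2; l3]) by (simpl; auto).
  assert (I3 : In l3 [l1; l2; l3]) by (simpl; auto).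
  destruct (chambers_le_three_lines l1 l2 l3 cs V1 V2 V3 Hnz Hoff Hpw) as [C C'].
  destruct (vertex_bounds _ f0 l1 l2 l3 Hv I1 I2 I3 V1 V2 V3 D12 D13) as [W1 S1].
  destruct (vertex_bounds _ f0 l2 l1 l3 Hv I2 I1 I3 V2 V1 V3 (same_tline_sym _ _ D12) D23)
    as [W2 S2].
  destruct (vertex_bounds _ f0 l3 l1 l2 Hv I3 I1 I2 V3 V1 V2 (same_tline_sym _ _ D13)
              (same_tline_sym _ _ D23)) as [W3 S3].
  rewrite <- (gcd_det_swap l1 l2 l3 V1 V2) in W2.
  rewrite (Z.gcd_comm (det l3 l1)), <- (gcd_det_swap l2 l3 l1 V2 V3), Z.gcd_comm,
    <- (gcd_det_swap l1 l2 l3 V1 V2) in W3.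
  rewrite (det_anti l1 l2) in W2, S2. rewrite (det_anti l1 l3), (det_anti l2 l3) in W3, S3.
  set (G := Z.gcd (det l1 l2) (det l1 l3)) in *. rewrite Hcl in C, C'.
  assert (HG : (0 < G)%Z) by (apply Z_gcd_pos; auto).
  destruct (classic (concurrent l1 l2 l3)) as [Hc|Hnc].
  - destruct (three_line_counts_tight (Z.abs (det l1 l2)) (Z.abs (det l1 l3))
                (Z.abs (det l2 l3)) G (Z.of_nat f0)) as [E12 [E13 [E23 Ef]]]; try lia.
    + apply Z.divide_abs_r, Z.gcd_divide_l.
    + apply Z.divide_abs_r, Z.gcd_divide_r.
    + apply Z.divide_abs_r, gcd_det_divides; auto.
    + specialize (C' Hc). lia.
    + assert (Hodd : Z.odd G = true) by (apply (pairwise_det_abs_odd l1 l2 l3); auto).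
      apply Z.odd_spec in Hodd. destruct Hodd as [m Hm].
      apply Nat.odd_spec. exists (Z.to_nat m). lia.
  - exfalso.
    specialize (S1 Hnc).
    specialize (S2 ltac:(intros (x & y & T1 & T2 & T3); apply Hnc; exists x, y; auto)).
    specialize (S3 ltac:(intros (x & y & T1 & T2 & T3); apply Hnc; exists x, y; auto)).
    lia.
Qed.

Lemma odd_of_three_line_arrangement (f0 : nat) (A : list tline) : (0 < f0)%nat ->
  toric_arrangement A -> length A = 3%nat ->
  num_vertices A f0 -> num_chambers A (2 * f0) -> Nat.odd f0 = true.
Proof.
  intros Hf0 [HF [HP Hess]] Hlen Hv [cs [Hcl [Hoff [Hpw _]]]].
  destruct A as [|l1 [|l2 [|l3 [|l4 A]]]]; simpl in Hlen; try discriminate.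
  inversion HF as [|? ? V1 HF']; inversion HF' as [|? ? V2 HF'']; inversion HF'' as [|? ? V3 _].
  inversion HP as [|? ? F1 P1]; inversion P1 as [|? ? F2 _].
  inversion F1 as [|? ? D12 F1']; inversion F1' as [|? ? D13 _]; inversion F2 as [|? ? D23 _].
  exact (odd_of_three_line_counts l1 l2 l3 f0 cs V1 V2 V3 D12 D13 D23
           (three_lines_det_nonzero _ _ _ V1 Hess) Hf0 Hv Hcl Hoff Hpw).
Qed.

Lemma not_same_tline_of_point l l' x y : on_tline l x y -> ~ on_tline l' x y ->
  ~ same_tline l l'.
Proof. intros H H' Hs. apply H', Hs, H. Qed.

Lemma not_on_tline_half l x y : lform l x y = 1 / 2 -> ~ on_tline l x y.
Proof. intros E. apply (in_strip_not_on_tline l 0). unfold in_strip. rewrite E. simpl. lra. Qed.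

Section OddConstruction.

Variable f0 : nat.
Hypothesis f0_pos : (0 < f0)%nat.
Hypothesis f0_odd : Nat.odd f0 = true.

Let d : Z := Z.of_nat f0.
Let l1 : tline := ((1%Z, 0%Z), 0).
Let l2 : tline := ((1%Z, d), 0).
Let l3 : tline := ((2%Z, d), 0).
Let A : list tline := [l1; l2; l3].

Lemma IZR_d_nonzero : IZR d <> 0.
Proof. apply not_0_IZR. unfold d. lia. Qed.

Lemma lform_l1 x y : lform l1 x y = x.
Proof. unfold lform, la, lb, lc, l1, l2, l3; cbn [fst snd]. ring. Qed.

Lemma lform_l2 x y : lform l2 x y = x + IZR d * y.
Proof. unfold lform, la, lb, lc, l1, l2, l3; cbn [fst snd]. ring. Qed.

Lemma lform_l3 x y : lform l3 x y = 2 * x + IZR d * y.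
Proof. unfold lform, la, lb, lc, l1, l2, l3; cbn [fst snd]. ring. Qed.

Lemma valid_A : Forall valid_tline A.
Proof.
  assert (V3 : valid_tline l3).
  { unfold valid_tline, l3, la, lb, d; cbn [fst snd].
    apply Nat.odd_spec in f0_odd. destruct f0_odd as [k Hk].
    replace (Z.of_nat f0) with (1 + Z.of_nat k * 2)%Z by lia.
    rewrite Z.gcd_add_mult_diag_r. reflexivity. }
  repeat constructor; auto. apply Z.gcd_1_l.
Qed.

Lemma on_A_lform l x y : In l A -> on_tline l x y <-> exists N : Z, lform l x y = IZR N.
Proof.
  intros Il. split; [apply on_tline_lform|].
  intros [N HN]. apply (lform_on_tline _ _ _ N); auto.
  pose proof valid_A as V. rewrite Forall_forall in V. auto.
Qed.

Lemma arrangement_A : toric_arrangement A.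
Proof.
  assert (I1 : In l1 A) by (simpl; auto).
  assert (I2 : In l2 A) by (simpl; auto).
  assert (I3 : In l3 A) by (simpl; auto).
  assert (Hd := IZR_d_nonzero).
  assert (P0 : on_tline l1 0 (1 / (2 * IZR d)))
    by (apply on_A_lform; auto; exists 0%Z; apply lform_l1).
  split; [apply valid_A|split].
  - repeat constructor.
    + apply (not_same_tline_of_point _ _ _ _ P0), not_on_tline_half.
      rewrite lform_l2. field. auto.
    + apply (not_same_tline_of_point _ _ _ _ P0), not_on_tline_half.
      rewrite lform_l3. field. auto.
    + apply (not_same_tline_of_point _ _ (1 / 2) (- 1 / (2 * IZR d))).
      * apply on_A_lform; auto. exists 0%Z. rewrite lform_l2. field. auto.
      * apply not_on_tline_half. rewrite lform_l3. field. auto.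
  - exists l1, l2. split; [auto|split; [auto|]].
    unfold parallel, l1, l2, la, lb, d; cbn [fst snd]. lia.
Qed.

Lemma vertex_A_coords p : is_vertex A p ->
  exists X Y : Z, fst p = IZR X /\ IZR d * snd p = IZR Y.
Proof.
  intros [l [l' [Il [Il' [Hs [Ho Ho']]]]]].
  apply on_A_lform in Ho; auto. apply on_A_lform in Ho'; auto.
  destruct Ho as [N1 H1]; destruct Ho' as [N2 H2].
  assert (Hrefl : forall l0, ~ ~ same_tline l0 l0) by (intros l0 H; apply H; intros x y; tauto).
  simpl in Il, Il'.
  destruct Il as [<-|[<-|[<-|[]]]]; destruct Il' as [<-|[<-|[<-|[]]]];
    try (exfalso; apply (Hrefl _ Hs));
    rewrite ?lform_l1, ?lform_l2, ?lform_l3 in H1;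
    rewrite ?lform_l1, ?lform_l2, ?lform_l3 in H2.
  - exists N1, (N2 - N1)%Z. rewrite minus_IZR. lra.
  - exists N1, (N2 - 2 * N1)%Z. rewrite minus_IZR, mult_IZR. lra.
  - exists N2, (N1 - N2)%Z. rewrite minus_IZR. lra.
  - exists (N2 - N1)%Z, (2 * N1 - N2)%Z. rewrite !minus_IZR, mult_IZR. lra.
  - exists N2, (N1 - 2 * N2)%Z. rewrite minus_IZR, mult_IZR. lra.
  - exists (N1 - N2)%Z, (2 * N2 - N1)%Z. rewrite !minus_IZR, mult_IZR. lra.
Qed.

Lemma vertices_A : num_vertices A f0.
Proof.
  assert (Hd := IZR_d_nonzero).
  exists (map (fun k => (0, frac_point 0 d k)) (seq 0 f0)).
  split; [rewrite length_map, length_seq; auto|split; [|split]].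
  - intros v Hv. apply in_map_iff in Hv. destruct Hv as [k [<- Hk]].
    exists l1, l2. split; [simpl; auto|split; [simpl; auto|split]].
    + pose proof arrangement_A as [_ [HP _]]. inversion HP as [|? ? F1 _].
      rewrite Forall_forall in F1. apply F1. simpl; auto.
    + split; apply on_A_lform; simpl; auto.
      * exists 0%Z. apply lform_l1.
      * exists (Z.of_nat k). rewrite lform_l2. unfold frac_point. rewrite <- INR_IZR_INZ.
        field. auto.
  - rewrite <- (map_map (frac_point 0 d) (fun Y => (0, Y))).
    apply ForallOrdPairs_map.
    eapply ForallOrdPairs_impl; [|apply frac_points_pairwise; [apply seq_NoDup|]].
    + intros Y1 Y2 H [m [n [_ Hn]]]. apply H. exists n. simpl in Hn. lra.
    + intros k Hk. apply in_seq in Hk. unfold d. lia.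
  - intros p Hp. destruct (vertex_A_coords p Hp) as [X [Y [HX HY]]].
    assert (Hdpos : (0 < d)%Z) by (unfold d; lia).
    pose proof (Z.mod_pos_bound Y d Hdpos).
    exists (0, frac_point 0 d (Z.to_nat (Y mod d))). split.
    + apply (in_map (fun k => (0, frac_point 0 d k))). apply in_seq. unfold d in *. lia.
    + exists X, (Y / d)%Z. simpl. split; [lra|].
      unfold frac_point. rewrite INR_IZR_INZ, Z2Nat.id by lia.
      apply (Rmult_eq_reg_l (IZR d)); auto. rewrite HY.
      rewrite (Z.div_mod Y d) at 1 by lia. izr. field. auto.
Qed.

Definition chamber_rep (i : nat) : R * R :=
  (1 / 4 + INR (i mod 2) / 2, (INR (i / 2) + 1 / 4 - INR (i mod 2) / 4) / IZR d).

Lemma chamber_rep_strips i :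
  in_strip l1 0 (fst (chamber_rep i)) (snd (chamber_rep i)) /\
  in_strip l2 (Z.of_nat (i / 2)) (fst (chamber_rep i)) (snd (chamber_rep i)) /\
  in_strip l3 (Z.of_nat (i / 2) + Z.of_nat (i mod 2)) (fst (chamber_rep i)) (snd (chamber_rep i)).
Proof.
  unfold in_strip, chamber_rep. rewrite lform_l1, lform_l2, lform_l3; cbn [fst snd].
  assert (He : 0 <= INR (i mod 2) <= 1).
  { split; [apply pos_INR|]. apply (le_INR _ 1). pose proof (Nat.mod_upper_bound i 2). lia. }
  pose proof IZR_d_nonzero.
  replace (IZR d * ((INR (i / 2) + 1 / 4 - INR (i mod 2) / 4) / IZR d))
    with (INR (i / 2) + 1 / 4 - INR (i mod 2) / 4) by (field; auto).
  rewrite plus_IZR, <- !INR_IZR_INZ. lra.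
Qed.

Lemma chamber_rep_off i : ~ on_arr A (fst (chamber_rep i)) (snd (chamber_rep i)).
Proof.
  intros [l [Il Ho]]. destruct (chamber_rep_strips i) as [F1 [F2 F3]].
  simpl in Il. destruct Il as [<-|[<-|[<-|[]]]].
  - exact (in_strip_not_on_tline _ _ _ _ F1 Ho).
  - exact (in_strip_not_on_tline _ _ _ _ F2 Ho).
  - exact (in_strip_not_on_tline _ _ _ _ F3 Ho).
Qed.

Lemma chamber_rep_injective i1 i2 : (i1 < 2 * f0)%nat -> (i2 < 2 * f0)%nat ->
  same_chamber A (chamber_rep i1) (chamber_rep i2) -> i1 = i2.
Proof.
  intros H1 H2 Hs. destruct (strips_of_same_chamber A _ _ valid_A Hs) as [m [n Hmn]].
  destruct (chamber_rep_strips i1) as [F1 [F2 F3]].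
  destruct (chamber_rep_strips i2) as [G1 [G2 G3]].
  pose proof (in_strip_unique _ _ _ _ _ (Hmn l1 ltac:(simpl; auto) _ F1) G1) as E1.
  pose proof (in_strip_unique _ _ _ _ _ (Hmn l2 ltac:(simpl; auto) _ F2) G2) as E2.
  pose proof (in_strip_unique _ _ _ _ _ (Hmn l3 ltac:(simpl; auto) _ F3) G3) as E3.
  unfold l1, l2, l3, la, lb in E1, E2, E3; cbn [fst snd] in E1, E2, E3.
  pose proof (Nat.mod_upper_bound i1 2 ltac:(lia)).
  pose proof (Nat.mod_upper_bound i2 2 ltac:(lia)).
  pose proof (Nat.div_mod_eq i1 2). pose proof (Nat.div_mod_eq i2 2).
  assert (Hm : m = 0%Z) by lia. subst m.
  assert (Hn : n = 0%Z) by (unfold d in *; destruct (Z.eq_dec n 0); [auto|nia]).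
  subst n. lia.
Qed.

Lemma chambers_A : num_chambers A (2 * f0).
Proof.
  set (cs := map chamber_rep (seq 0 (2 * f0))).
  assert (Hoff : forall c, In c cs -> ~ on_arr A (fst c) (snd c)).
  { intros c Hc. apply in_map_iff in Hc. destruct Hc as [i [<- _]]. apply chamber_rep_off. }
  assert (Hpw : ForallOrdPairs (fun c c' => ~ same_chamber A c c') cs).
  { apply ForallOrdPairs_map, ForallOrdPairs_of_NoDup; [apply seq_NoDup|].
    intros i1 i2 Hi1 Hi2 Hne Hs. apply in_seq in Hi1; apply in_seq in Hi2.
    apply Hne, chamber_rep_injective; auto; lia. }
  exists cs. split; [unfold cs; rewrite length_map, length_seq; auto|].
  split; [auto|split; [auto|]].
  (* A further chamber would exceed the bound of [chambers_le_three_lines]. *)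
  intros p Hp. apply NNPP. intros Hn.
  assert (V := valid_A). inversion V as [|? ? V1 V']; inversion V' as [|? ? V2 V''];
    inversion V'' as [|? ? V3 _].
  assert (Hconc : concurrent l1 l2 l3).
  { exists 0, 0. split; [|split]; apply on_A_lform; simpl; auto; exists 0%Z;
      rewrite ?lform_l1, ?lform_l2, ?lform_l3; ring. }
  destruct (chambers_le_three_lines l1 l2 l3 (cs ++ [p]) V1 V2 V3) as [_ B].
  - left. unfold det, l1, l2, la, lb, d; cbn [fst snd]. lia.
  - intros c Hc. apply in_app_or in Hc. destruct Hc as [Hc|[<-|[]]]; auto.
  - apply ForallOrdPairs_app; auto.
    + repeat constructor.
    + intros c c' Hc [<-|[]] Hs. apply Hn. eauto.
  - specialize (B Hconc). rewrite length_app in B.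
    unfold cs in B. rewrite length_map, length_seq in B.
    unfold det, l1, l2, l3, la, lb in B; cbn [fst snd length] in B.
    replace (1 * d - 1 * 0)%Z with d in B by ring. replace (1 * d - 2 * 0)%Z with d in B by ring.
    rewrite Z.gcd_diag in B. unfold d in B. lia.
Qed.

End OddConstruction.

Theorem mainTheorem8 (f0 : nat) (Hf0 : (0 < f0)%nat) :
  (exists A : list tline,
     toric_arrangement A /\ length A = 3%nat /\
     num_vertices A f0 /\ num_chambers A (2 * f0)%nat)
  <-> Nat.odd f0 = true.
Proof.
  split.
  - intros [A [HA [Hlen [Hv Hc]]]]. exact (odd_of_three_line_arrangement f0 A Hf0 HA Hlen Hv Hc).
  - intros Hodd. eexists. split; [apply (arrangement_A f0 Hf0 Hodd)|].
    split; [reflexivity|split].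
    + apply (vertices_A f0 Hf0 Hodd).
    + apply (chambers_A f0 Hf0 Hodd).
Qed.
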